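(* Let $\Omega\subset\mathbb{P}(\mathbb{R}^d)$ be a properly convex domain and $K\subset\Omega$ a compact subset. There exist $\varepsilon>0$ and $L>0$ such that for every $k\in\{1,\dots,d-1\}$ and every $g\in\mathrm{Aut}(\Omega)$ with $\frac{\sigma_k}{\sigma_{k+1}}(g)>L$, we have $\inf_{x\in K}\mathrm{dist}(x,\mathbb{P}(\Xi_k(g)))>\varepsilon$.
   Context: An open set $\Omega\subset\mathbb{P}(\mathbb{R}^d)$ is a properly convex domain if its closure is a bounded convex subset of some affine chart. $\mathrm{Aut}(\Omega)$ is the group of $g\in\mathsf{GL}_d(\mathbb{R})$ with $g\Omega=\Omega$. For $g$ with singular values $\sigma_1(g)\ge\dots\ge\sigma_d(g)$ and Cartan decomposition $g=k_g\mathrm{diag}(\sigma_1(g),\dots,\sigma_d(g))k_g'$ ($k_g,k_g'\in\mathsf{O}(d)$), if $\sigma_k(g)>\sigma_{k+1}(g)$ then $\Xi_k(g):=k_g\langle e_1,\dots,e_k\rangle$. $\mathbb{P}(\mathbb{R}^d)$ carries the metric $d_{\mathbb{P}}([u],[v])=\sqrt{1-\frac{\langle u,v\rangle^2}{\|u\|^2\|v\|^2}}$ and $\mathrm{dist}(x,Y)$ is the minimal $d_{\mathbb{P}}$-distance from $x$ to $Y$. *)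

From HB Require Import structures.
From mathcomp Require Import all_boot all_order all_algebra.
From mathcomp Require Import all_classical all_reals.
From mathcomp Require Import ereal.
Set Implicit Arguments. Unset Strict Implicit. Unset Printing Implicit Defensive.
Import Order.TTheory GRing.Theory Num.Theory.
Local Open Scope ring_scope.
Local Open Scope classical_set_scope.

(* Points of P(R^d) are represented by nonzero column vectors v, [v] = line
   through v.  A subset of P(R^d) is represented by its (punctured) cone of
   representing vectors: a set of nonzero vectors stable by nonzero scaling. *)

Section Defs.
Variables (R : realType) (d : nat).
Notation vec := 'cV[R]_d.

Definition dotv (u v : vec) : R := (u^T *m v) 0 0.

Definition dP (u v : vec) : R :=
  Num.sqrt (1 - (dotv u v) ^+ 2 / (dotv u u * dotv v v)).

Definition is_pset (A : set vec) : Prop :=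
  (forall v, A v -> v != 0) /\ (forall v t, A v -> t != 0 -> A (t *: v)).

Definition popen (A : set vec) : Prop :=
  forall v, A v -> exists2 e : R, 0 < e &
    forall w, w != 0 -> dP v w < e -> A w.

Definition pclosure (A : set vec) : set vec :=
  [set v | v != 0 /\ forall e : R, 0 < e -> exists2 w, A w & dP v w < e].

Definition pcompact (A : set vec) : Prop :=
  forall (I : Type) (U : I -> set vec),
    (forall i, popen (U i)) ->
    (forall v, A v -> exists i, U i v) ->
    exists (n : nat) (f : nat -> I),
      forall v, A v -> exists2 j, (j < n)%N & U (f j) v.

(* Properly convex domain: an open set whose closure is a bounded convex
   subset of some affine chart {[v] : <a,v> <> 0} (a <> 0); the chart is
   identified with the affine hyperplane {w : <a,w> = 1} via [v] |-> v/<a,v>. *)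
Definition properly_convex_domain (Omega : set vec) : Prop :=
  is_pset Omega /\ popen Omega /\
  exists a : vec, a != 0 /\
    (forall v, pclosure Omega v -> dotv a v != 0) /\
    let S := [set w | pclosure Omega w /\ dotv a w = 1] in
    (forall u w (t : R), S u -> S w -> 0 <= t -> t <= 1 ->
        S ((1 - t) *: u + t *: w)) /\
    (exists M : R, forall w, S w -> dotv w w <= M).

Definition in_Aut (Omega : set vec) (g : 'M[R]_d) : Prop :=
  g \in unitmx /\ [set g *m v | v in Omega] = Omega.

Definition orthogonal_mx (k : 'M[R]_d) : Prop := k^T *m k = 1%:M.

(* Cartan decomposition g = k diag(s 1, ..., s d) k' with k, k' in O(d) and
   s 1 >= ... >= s d >= 0 (so s i = sigma_i(g), 1-based indexing). *)
Definition cartan_decomp (g k k' : 'M[R]_d) (s : nat -> R) : Prop :=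
  orthogonal_mx k /\ orthogonal_mx k' /\
  (forall i j, (1 <= i)%N -> (i <= j)%N -> (j <= d)%N -> s j <= s i) /\
  (forall i, (1 <= i <= d)%N -> 0 <= s i) /\
  g = k *m diag_mx (\row_(i < d) s i.+1) *m k'.

(* P(Xi_k(g)) = P(k <e_1, ..., e_k>), as the cone of nonzero vectors *)
Definition PXi (k : 'M[R]_d) (n : nat) : set vec :=
  [set y | y != 0 /\ exists c : vec,
      (forall i : 'I_d, (n <= i)%N -> c i 0 = 0) /\ y = k *m c].

Definition pdist (x : vec) (Y : set vec) : R := inf [set dP x y | y in Y].

End Defs.

(* Let r be a radius of uniform d_P-balls around K inside Omega and
   eta = r / (C + 1); take eps = eta / 2 and L = 1 / eta.  Suppose x in K is
   eta-close to P(Xi_k(g)), and let W be the last left singular vector of g.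
   The segment x + [-1, 1] r |x| W lies in Omega, hence so does its preimage
   under g, so |g^-1 (r |x| W)|^2 <= C |g^-1 x|^2.  The left side is at least
   (r |x| / sigma_d)^2, whereas sigma_(k+1) < eta sigma_k and the closeness of x
   to Xi_k give sigma_d^2 |g^-1 x|^2 <= 2 eta^2 |x|^2.  Since 2 C eta^2 < r^2,
   this is a contradiction. *)

From HB Require Import structures.
From mathcomp Require Import all_boot all_order all_algebra.
From mathcomp Require Import all_classical all_reals.
From mathcomp Require Import ereal.
From mathcomp Require Import ring lra zify.
Set Implicit Arguments. Unset Strict Implicit. Unset Printing Implicit Defensive.
Import Order.TTheory GRing.Theory Num.Theory.
Local Open Scope ring_scope.
Local Open Scope classical_set_scope.

Section Euclidean.
Variables (R : realType) (d : nat).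
Implicit Types (u v w : 'cV[R]_d) (A k : 'M[R]_d).

Lemma dotvE u v : dotv u v = \sum_i u i 0 * v i 0.
Proof. by rewrite /dotv !mxE; apply: eq_bigr => i _; rewrite mxE. Qed.

Lemma dotvC u v : dotv u v = dotv v u.
Proof. by rewrite !dotvE; apply: eq_bigr => i _; rewrite mulrC. Qed.

Lemma dotvDr u v w : dotv u (v + w) = dotv u v + dotv u w.
Proof. by rewrite !dotvE -big_split; apply: eq_bigr => i _; rewrite mxE mulrDr. Qed.

Lemma dotvDl u v w : dotv (v + w) u = dotv v u + dotv w u.
Proof. by rewrite dotvC dotvDr !(dotvC u). Qed.

Lemma dotvZr (t : R) u v : dotv u (t *: v) = t * dotv u v.
Proof. by rewrite !dotvE mulr_sumr; apply: eq_bigr => i _; rewrite mxE mulrCA. Qed.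

Lemma dotvZl (t : R) u v : dotv (t *: v) u = t * dotv v u.
Proof. by rewrite dotvC dotvZr dotvC. Qed.

Lemma dotv_ge0 u : 0 <= dotv u u.
Proof. by rewrite dotvE sumr_ge0 // => i _; rewrite -expr2 sqr_ge0. Qed.

Lemma sqr_coord_le_dotv u i : u i 0 ^+ 2 <= dotv u u.
Proof.
rewrite dotvE (bigD1 i) //= -expr2 lerDl sumr_ge0 // => j _.
by rewrite -expr2 sqr_ge0.
Qed.

Lemma dotv_eq0 u : (dotv u u == 0) = (u == 0).
Proof.
apply/idP/eqP => [/eqP u0|->]; last by rewrite dotvE big1 // => i _; rewrite mxE mul0r.
apply/matrixP => i j; rewrite (ord1 j) mxE; apply/eqP.
by rewrite -sqrf_eq0 eq_le sqr_ge0 andbT -u0 sqr_coord_le_dotv.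
Qed.

Lemma dotv_gt0 u : u != 0 -> 0 < dotv u u.
Proof. by move=> u0; rewrite lt_def dotv_eq0 u0 dotv_ge0. Qed.

Lemma dotv_addZ u v (t : R) :
  dotv (u + t *: v) (u + t *: v) = dotv u u + 2 * t * dotv u v + t ^+ 2 * dotv v v.
Proof. by rewrite !dotvDl !dotvDr !dotvZl !dotvZr (dotvC v u); ring. Qed.

Lemma dotv_subZ u v (t : R) :
  dotv (u - t *: v) (u - t *: v) = dotv u u - 2 * t * dotv u v + t ^+ 2 * dotv v v.
Proof. by rewrite -scaleNr dotv_addZ sqrrN; ring. Qed.

Lemma dotv_CS u v : dotv u v ^+ 2 <= dotv u u * dotv v v.
Proof.
have [->|v0] := eqVneq v 0.
  by rewrite -(scale0r (0 : 'cV_d)) !dotvZr !mul0r expr0n mulr0.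
have vv := dotv_gt0 v0.
have := dotv_ge0 (u - (dotv u v / dotv v v) *: v).
rewrite dotv_subZ -(pmulr_lge0 _ vv) => h; rewrite -subr_ge0.
by move: h; congr (0 <= _); field; rewrite gt_eqF.
Qed.

Lemma dotv_mulmxl A u v : dotv (A *m u) v = dotv u (A^T *m v).
Proof. by rewrite /dotv trmx_mul mulmxA. Qed.

Lemma dotv_delta (i : 'I_d) u : dotv (delta_mx i 0) u = u i 0.
Proof.
rewrite dotvE (bigD1 i) //= !mxE !eqxx mul1r big1 ?addr0 // => j ji.
by rewrite !mxE (negbTE ji) mul0r.
Qed.

Lemma orthogonal_mx_tr k : orthogonal_mx k -> orthogonal_mx k^T.
Proof. by rewrite /orthogonal_mx trmxK => /mulmx1C. Qed.

Lemma orthogonal_dotv k u v : orthogonal_mx k -> dotv (k *m u) (k *m v) = dotv u v.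
Proof. by move=> kk; rewrite dotv_mulmxl mulmxA kk mul1mx. Qed.

Definition normv u : R := Num.sqrt (dotv u u).

Lemma normv_ge0 u : 0 <= normv u. Proof. exact: sqrtr_ge0. Qed.

Lemma normv_gt0 u : u != 0 -> 0 < normv u.
Proof. by move=> u0; rewrite sqrtr_gt0 dotv_gt0. Qed.

Lemma sqr_normv u : normv u ^+ 2 = dotv u u.
Proof. by rewrite sqr_sqrtr // dotv_ge0. Qed.

Lemma normvZ (t : R) u : normv (t *: u) = `|t| * normv u.
Proof. by rewrite /normv dotvZl dotvZr mulrA -expr2 sqrtrM ?sqr_ge0 // sqrtr_sqr. Qed.

Lemma normvN u : normv (- u) = normv u.
Proof. by rewrite -scaleN1r normvZ normrN1 mul1r. Qed.

Lemma normv_dotv_le u v : `|dotv u v| <= normv u * normv v.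
Proof.
by rewrite -sqrtrM ?dotv_ge0 // -sqrtr_sqr ler_sqrt ?dotv_CS // mulr_ge0 ?dotv_ge0.
Qed.

Lemma normvD u v : normv (u + v) <= normv u + normv v.
Proof.
rewrite -(ger0_norm (addr_ge0 (normv_ge0 u) (normv_ge0 v))) -sqrtr_sqr.
rewrite ler_sqrt ?sqr_ge0 // -[v in u + v]scale1r dotv_addZ sqrrD !sqr_normv.
have := normv_dotv_le u v; have := ler_norm (dotv u v); lra.
Qed.

End Euclidean.

Section ProjectiveMetric.
Variables (R : realType) (d : nat).
Implicit Types (u v w : 'cV[R]_d).

Lemma dP_ge0 u v : 0 <= dP u v. Proof. exact: sqrtr_ge0. Qed.

Lemma dPvv v : v != 0 -> dP v v = 0.
Proof.
by move=> v0; rewrite /dP mulrV ?subrr ?sqrtr0 // unitfE mulf_neq0 ?gt_eqF ?dotv_gt0.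
Qed.

Lemma dP_sqr_mul u v : u != 0 -> v != 0 ->
  dP u v ^+ 2 * dotv u u =
    dotv (u - (dotv u v / dotv v v) *: v) (u - (dotv u v / dotv v v) *: v).
Proof.
move=> u0 v0; have uu := dotv_gt0 u0; have vv := dotv_gt0 v0.
have E : dotv (u - (dotv u v / dotv v v) *: v) (u - (dotv u v / dotv v v) *: v) =
    (1 - dotv u v ^+ 2 / (dotv u u * dotv v v)) * dotv u u.
  by rewrite dotv_subZ; field; rewrite !gt_eqF.
rewrite E sqr_sqrtr // -(pmulr_lge0 _ uu) -E; exact: dotv_ge0.
Qed.

Lemma dP_sqr_mul_le u v (t : R) : u != 0 -> v != 0 ->
  dP u v ^+ 2 * dotv u u <= dotv (u - t *: v) (u - t *: v).
Proof.
move=> u0 v0; have vv := dotv_gt0 v0; rewrite dP_sqr_mul // !dotv_subZ.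
have -> : dotv u u - 2 * t * dotv u v + t ^+ 2 * dotv v v =
    dotv u u - 2 * (dotv u v / dotv v v) * dotv u v + (dotv u v / dotv v v) ^+ 2 * dotv v v
    + dotv v v * (t - dotv u v / dotv v v) ^+ 2.
  by field; rewrite gt_eqF.
by rewrite lerDl mulr_ge0 ?sqr_ge0 ?dotv_ge0.
Qed.

Lemma dP_mul_normv_le u v (t : R) : u != 0 -> v != 0 ->
  dP u v * normv u <= normv (u - t *: v).
Proof.
move=> u0 v0; rewrite -(ger0_norm (dP_ge0 u v)) -sqrtr_sqr -sqrtrM ?sqr_ge0 //.
by rewrite ler_sqrt ?dotv_ge0 // dP_sqr_mul_le.
Qed.

Lemma dP_mul_normv u v : u != 0 -> v != 0 ->
  dP u v * normv u = normv (u - (dotv u v / dotv v v) *: v).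
Proof.
move=> u0 v0; rewrite /normv -dP_sqr_mul // sqrtrM ?sqr_ge0 // sqrtr_sqr.
by rewrite ger0_norm ?dP_ge0.
Qed.

Lemma dP_triangle u v w : u != 0 -> v != 0 -> w != 0 -> dP u w <= dP u v + dP v w.
Proof.
move=> u0 v0 w0; have uu := normv_gt0 u0; have vv := normv_gt0 v0.
set t := dotv u v / dotv v v; set t' := dotv v w / dotv w w.
have split_uw : u - (t * t') *: w = (u - t *: v) + t *: (v - t' *: w).
  by rewrite scalerBr scalerA addrA subrK.
have tv_le : `|t| * normv v <= normv u.
  have -> : `|t| * normv v = `|dotv u v| / normv v.
    by rewrite /t normrM normfV (ger0_norm (dotv_ge0 v)) -sqr_normv; field; rewrite gt_eqF.
  by rewrite ler_pdivrMr // normv_dotv_le.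
have := dP_mul_normv_le (t * t') u0 w0; rewrite split_uw => /le_trans/(_ (normvD _ _)).
rewrite normvZ -dP_mul_normv // -dP_mul_normv // => h.
rewrite -(ler_pM2r uu) mulrDl (le_trans h) // lerD2l mulrCA.
by rewrite ler_wpM2l ?dP_ge0.
Qed.

Lemma add_small_in (A : set 'cV[R]_d) x z (r : R) :
  x != 0 -> r < 1 -> (forall w, w != 0 -> dP x w <= r -> A w) ->
  normv z <= r * normv x -> A (x + z).
Proof.
move=> x0 r_lt1 ball le_z; have x_gt0 := normv_gt0 x0.
have xz0 : x + z != 0.
  apply/eqP => xz; have zE : z = - x by rewrite -(addKr x z) xz addr0.
  by move: le_z; rewrite zE normvN leNgt gtr_pMl ?r_lt1.
apply: (ball _ xz0); rewrite -(ler_pM2r x_gt0) (le_trans (dP_mul_normv_le 1 x0 xz0)) //.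
by rewrite scale1r opprD addNKr normvN.
Qed.

End ProjectiveMetric.

Lemma finite_pos_lower_bound (R : realDomainType) n (h : nat -> R) :
  (forall j, (j < n)%N -> 0 < h j) ->
  exists2 r : R, 0 < r & forall j, (j < n)%N -> r <= h j.
Proof.
elim: n => [|n IH] h_gt0; first by exists 1.
have [r r_gt0 le_r] := IH (fun j jn => h_gt0 j (leqW jn)).
exists (Num.min r (h n)); first by rewrite lt_min r_gt0 h_gt0.
move=> j; rewrite ltnS leq_eqVlt => /orP[/eqP->|jn]; first by rewrite ge_min lexx orbT.
by rewrite ge_min le_r.
Qed.

Lemma pcompact_uniform_ball (R : realType) d (Omega K : set 'cV[R]_d) :
  is_pset K -> pcompact K -> K `<=` Omega -> popen Omega ->
  exists2 r : R, 0 < r < 1 & forall x, K x -> forall w, w != 0 -> dP x w <= r -> Omega w.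
Proof.
move=> [K_neq0 _] K_compact KO O_open.
(* Balls B(v, e) with B(v, 2 e) inside Omega cover K; the least radius of a
   finite subcover is a Lebesgue number. *)
pose I := {p : 'cV[R]_d * R |
  [/\ p.1 != 0, 0 < p.2 & forall w, w != 0 -> dP p.1 w < 2 * p.2 -> Omega w]}.
pose U (p : I) : set 'cV[R]_d := [set u | u != 0 /\ dP (sval p).1 u < (sval p).2].
have U_open p : popen (U p).
  case: p => q qP; rewrite /U /=; case: qP => v0 _ _ u [u0 vu].
  exists (q.2 - dP q.1 u); first by rewrite subr_gt0.
  by move=> w w0 uw; split => //=; have := dP_triangle v0 u0 w0; lra.
have U_cover v : K v -> exists p, U p v.
  move=> Kv; have v0 := K_neq0 v Kv; have [e e_gt0 ball] := O_open v (KO v Kv).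
  have p_ok : [/\ v != 0, 0 < e / 2 & forall w, w != 0 -> dP v w < 2 * (e / 2) -> Omega w].
    by split; rewrite ?divr_gt0 // => w w0; rewrite mulrC divfK ?pnatr_eq0 //; exact: ball.
  by exists (exist _ (v, e / 2) p_ok); split; rewrite //= dPvv ?divr_gt0.
have [n [f K_sub]] := K_compact _ U U_open U_cover.
have radius_gt0 j : (j < n)%N -> 0 < (sval (f j)).2 by case: (svalP (f j)).
have [r r_gt0 le_r] := finite_pos_lower_bound radius_gt0.
have m_gt0 : 0 < Num.min r 1 by rewrite lt_min r_gt0 ltr01.
have m_le1 : Num.min r 1 <= 1 by rewrite ge_min lexx orbT.
have m_ler : Num.min r 1 <= r by rewrite ge_min lexx.
exists (Num.min r 1 / 2); first by apply/andP; split; lra.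
move=> x Kx w w0 xw; have [j jn [x0 vx]] := K_sub x Kx.
move: (le_r j jn) vx; case: (f j) => p /= [v0 _ ball] re vx.
apply: (ball w w0); have := dP_triangle v0 x0 w0; lra.
Qed.

Lemma properly_convex_cone_bound (R : realType) d (Omega : set 'cV[R]_d) :
  properly_convex_domain Omega ->
  exists a (M : R), 0 <= M /\
    forall y, Omega y -> dotv a y != 0 /\ dotv y y <= M * dotv a y ^+ 2.
Proof.
move=> [[O_neq0 O_scale] [_ [a [_ [a_cl [_ [M S_bound]]]]]]].
have O_cl y : Omega y -> pclosure Omega y.
  by move=> Oy; split => [|e e_gt0]; [exact: O_neq0 | exists y; rewrite ?dPvv ?O_neq0].
exists a, (Num.max M 0); split=> [|y Oy]; first by rewrite le_max lexx orbT.
have ay := a_cl y (O_cl y Oy); split=> //.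
have ay2 : 0 < dotv a y ^+ 2 by rewrite exprn_even_gt0.
have /S_bound : pclosure Omega ((dotv a y)^-1 *: y) /\ dotv a ((dotv a y)^-1 *: y) = 1.
  by split; [apply/O_cl/O_scale; rewrite ?invr_eq0 | rewrite dotvZr mulVf].
rewrite dotvZl dotvZr mulrA -expr2 exprVn => le_M.
by rewrite -ler_pdivrMr // mulrC (le_trans le_M) // le_max lexx.
Qed.

Lemma abs_lt_of_segment_neq0 (R : realFieldType) (A B : R) :
  (forall tau, `|tau| <= 1 -> A + tau * B != 0) -> `|B| < `|A|.
Proof.
move=> AB_neq0; rewrite ltNge; apply/negP => le_AB.
have B_neq0 : B != 0.
  apply: contraTneq le_AB => ->; rewrite normr0 normr_le0.
  by have := AB_neq0 0; rewrite normr0 ler01 mul0r addr0 => /(_ isT).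
have := AB_neq0 (- (A / B)).
rewrite normrN normrM normfV ler_pdivrMr ?normr_gt0 // mul1r le_AB.
by rewrite mulNr divfK // subrr eqxx => /(_ isT).
Qed.

Lemma in_Aut_invmx (R : realType) d (Omega : set 'cV[R]_d) g u :
  in_Aut Omega g -> Omega u -> Omega (invmx g *m u).
Proof.
move=> [g_unit g_Omega] Ou.
have [v Ov <-] : [set g *m v | v in Omega] u by rewrite g_Omega.
by rewrite mulKmx.
Qed.

Section ConeBound.
Variables (R : realType) (d : nat) (Omega : set 'cV[R]_d) (a : 'cV[R]_d) (M : R).
Hypothesis M_ge0 : 0 <= M.
Hypothesis Omega_bound :
  forall y, Omega y -> dotv a y != 0 /\ dotv y y <= M * dotv a y ^+ 2.

Lemma segment_dotv_le v w :
  (forall tau, `|tau| <= 1 -> Omega (v + tau *: w)) ->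
  dotv w w <= 2 * M * dotv a a * dotv v v.
Proof.
move=> seg; pose A := dotv a v; pose B := dotv a w.
have dotv_seg tau : dotv a (v + tau *: w) = A + tau * B by rewrite dotvDr dotvZr.
have /abs_lt_of_segment_neq0 /ltW le_BA : forall tau, `|tau| <= 1 -> A + tau * B != 0.
  by move=> tau /seg /Omega_bound []; rewrite dotv_seg.
have B2_le : M * B ^+ 2 <= M * A ^+ 2.
  rewrite ler_wpM2l // -(real_normK (num_real A)) -(real_normK (num_real B)).
  by rewrite ler_sqr ?nnegrE.
have A2_le : M * A ^+ 2 <= M * (dotv a a * dotv v v) by rewrite ler_wpM2l ?dotv_CS.
have le1 : `|1 : R| <= 1 by rewrite normr1.
have leN1 : `|-1 : R| <= 1 by rewrite normrN normr1.
have := (Omega_bound (seg _ le1)).2; have := (Omega_bound (seg _ leN1)).2.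
rewrite !dotv_addZ !dotv_seg; have := dotv_ge0 v; lra.
Qed.

Lemma in_Aut_segment_dotv_le g x w :
  in_Aut Omega g -> (forall tau, `|tau| <= 1 -> Omega (x + tau *: w)) ->
  dotv (invmx g *m w) (invmx g *m w) <=
    2 * M * dotv a a * dotv (invmx g *m x) (invmx g *m x).
Proof.
move=> g_Aut seg; apply: segment_dotv_le => tau /seg /(in_Aut_invmx g_Aut).
by rewrite mulmxDr scalemxAr.
Qed.

End ConeBound.

Section SingularValues.
Variables (R : realType) (d : nat) (g k1 k2 : 'M[R]_d) (s : nat -> R).
Implicit Types (v c : 'cV[R]_d).
Hypothesis gKAK : cartan_decomp g k1 k2 s.

Lemma cartan_coord v (i : 'I_d) : (k1^T *m (g *m v)) i 0 = s i.+1 * (k2 *m v) i 0.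
Proof.
case: gKAK => k1o [_ [_ [_ ->]]].
by rewrite -!mulmxA mulmxA k1o mul1mx mul_diag_mx !mxE.
Qed.

Lemma sqr_dotv_cartan_le v (i : 'I_d) :
  dotv (k1 *m delta_mx i 0) (g *m v) ^+ 2 <= s i.+1 ^+ 2 * dotv v v.
Proof.
case: gKAK => _ [k2o _].
rewrite dotv_mulmxl dotv_delta cartan_coord exprMn ler_wpM2l ?sqr_ge0 //.
by rewrite -(orthogonal_dotv v v k2o) sqr_coord_le_dotv.
Qed.

Lemma cartan_dotv_near_Xi k (eta : R) v c :
  (k < d)%N -> 0 <= eta -> s k.+1 <= eta * s k ->
  (forall i : 'I_d, (k <= i)%N -> c i 0 = 0) ->
  s d ^+ 2 * dotv v v <=
    eta ^+ 2 * dotv (g *m v) (g *m v) + dotv (g *m v - k1 *m c) (g *m v - k1 *m c).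
Proof.
move=> kd eta_ge0 s_gap c0; case: gKAK => k1o [k2o [s_anti [s_ge0 _]]].
have k1To := orthogonal_mx_tr k1o.
rewrite -(orthogonal_dotv v v k2o) -(orthogonal_dotv (g *m v) _ k1To).
rewrite -(orthogonal_dotv (g *m v - _) _ k1To) !dotvE !mulr_sumr -big_split /=.
apply: ler_sum => i _; rewrite -!expr2.
have sd_ge0 : 0 <= s d by apply: s_ge0; rewrite (leq_ltn_trans (leq0n k) kd) leqnn.
have sd_le : s d <= s i.+1 by apply: s_anti.
have k1TK : k1^T *m (k1 *m c) = c by rewrite mulmxA k1o mul1mx.
have coordE : (k1^T *m (g *m v - k1 *m c)) i 0 = s i.+1 * (k2 *m v) i 0 - c i 0.
  by rewrite mulmxBr k1TK -cartan_coord !mxE.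
rewrite coordE cartan_coord; set q := (k2 *m v) i 0.
(* Coordinates below k are controlled by the gap s_(k+1) <= eta s_k, the others
   by the distance from g v to Xi_k, where g v and g v - k1 c agree. *)
have sqr_scale b : s d <= b -> s d ^+ 2 * q ^+ 2 <= (b * q) ^+ 2.
  move=> le_b; rewrite exprMn ler_wpM2r ?sqr_ge0 // ler_sqr ?nnegrE //.
  exact: le_trans le_b.
case: (ltnP i k) => [ik|ki].
- have sd_le_eta : s d <= eta * s i.+1.
    apply: (le_trans (s_anti k.+1 d isT kd (leqnn d))); apply: (le_trans s_gap).
    by apply: ler_wpM2l => //; apply: s_anti => //; exact: ltnW.
  have := sqr_scale _ sd_le_eta; have := sqr_ge0 (s i.+1 * q - c i 0); lra.
- have := sqr_scale _ sd_le; have := sqr_ge0 (eta * (s i.+1 * q)).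
  rewrite c0 // subr0; lra.
Qed.

End SingularValues.

Lemma PXi_delta (R : realType) d (k1 : 'M[R]_d) k (i : 'I_d) :
  orthogonal_mx k1 -> (i < k)%N -> PXi k1 k (k1 *m delta_mx i 0).
Proof.
move=> k1o ik; split.
  by rewrite -dotv_eq0 orthogonal_dotv // dotv_delta mxE !eqxx oner_neq0.
exists (delta_mx i 0); split=> // j kj.
by rewrite mxE eqE /= gtn_eqF // (leq_trans ik kj).
Qed.

Lemma le_mul_of_inv_lt_div (R : numFieldType) (e a b : R) :
  0 < e -> 0 <= a -> 0 <= b -> e^-1 < a / b -> b <= e * a.
Proof.
move=> e_gt0 a_ge0 b_ge0; have [-> _|b_neq0] := eqVneq b 0.
  exact: mulr_ge0 (ltW e_gt0) a_ge0.
have b_gt0 : 0 < b by rewrite lt_def b_neq0.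
rewrite ltr_pdivlMr // -(ltr_pM2l e_gt0) mulrA mulfV ?gt_eqF // mul1r; exact: ltW.
Qed.

Lemma lt_ereal_inf_pdist (R : realType) d (K Y : set 'cV[R]_d) y0 (e e' : R) :
  Y y0 -> (forall x y, K x -> Y y -> e <= dP x y) -> e' < e ->
  (e'%:E < ereal_inf [set (pdist x Y)%:E | x in K])%E.
Proof.
move=> Yy0 far lt_e; apply: (@lt_le_trans _ _ e%:E); first by rewrite lte_fin.
apply/ereal_infP => _ [x Kx <-]; rewrite lee_fin.
apply: lb_le_inf; first by exists (dP x y0), y0.
by move=> _ [y Yy <-]; exact: far.
Qed.

Section FarFromXi.
Variables (R : realType) (d : nat) (Omega K : set 'cV[R]_d) (a : 'cV[R]_d) (M r : R).
Hypothesis M_ge0 : 0 <= M.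
Hypothesis Omega_bound :
  forall y, Omega y -> dotv a y != 0 /\ dotv y y <= M * dotv a y ^+ 2.
Hypotheses (r_gt0 : 0 < r) (r_lt1 : r < 1).
Hypothesis K_neq0 : forall x, K x -> x != 0.
Hypothesis K_ball : forall x, K x -> forall w, w != 0 -> dP x w <= r -> Omega w.

Local Notation C := (2 * M * dotv a a).
Local Notation eta := (r / (C + 1)).

Let C_ge0 : 0 <= C. Proof. by rewrite !mulr_ge0 ?dotv_ge0. Qed.

Lemma far_radius_gt0 : 0 < eta.
Proof. by rewrite divr_gt0 // ltr_wpDl ?mulr_ge0 ?dotv_ge0. Qed.

Lemma far_radius_small : C * (2 * eta ^+ 2) < r ^+ 2.
Proof.
have C1_gt0 : 0 < C + 1 by rewrite ltr_wpDl.
have -> : C * (2 * eta ^+ 2) = r ^+ 2 * (2 * C / (C + 1) ^+ 2).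
  by field; rewrite gt_eqF.
rewrite gtr_pMr ?exprn_gt0 // ltr_pdivrMr ?exprn_gt0 // mul1r.
by have := sqr_ge0 C; lra.
Qed.

Lemma far_from_Xi k g k1 k2 s x y :
  (k < d)%N -> in_Aut Omega g -> cartan_decomp g k1 k2 s -> s k.+1 <= eta * s k ->
  K x -> PXi k1 k y -> eta <= dP x y.
Proof.
move=> kd g_Aut gKAK s_gap Kx [y0 [c [c0 yE]]].
rewrite leNgt; apply/negP => near.
have x0 := K_neq0 Kx.
have [k1o _] := gKAK.
pose t := dotv x y / dotv y y.
have e_small : dotv (x - k1 *m (t *: c)) (x - k1 *m (t *: c)) <= eta ^+ 2 * dotv x x.
  rewrite -scalemxAr -yE -dP_sqr_mul // ler_wpM2r ?dotv_ge0 //.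
  by rewrite ler_sqr ?nnegrE ?dP_ge0 ?(ltW far_radius_gt0) ?(ltW near).
have last_lt : (d.-1 < d)%N by rewrite ltn_predL (leq_ltn_trans (leq0n k) kd).
pose W : 'cV[R]_d := k1 *m delta_mx (Ordinal last_lt) 0.
have WW : dotv W W = 1 by rewrite orthogonal_dotv // dotv_delta mxE !eqxx.
pose w := (r * normv x) *: W.
have seg tau : `|tau| <= 1 -> Omega (x + tau *: w).
  move=> tau_le1; apply: add_small_in x0 r_lt1 (@K_ball x Kx) _.
  have rx_ge0 : 0 <= r * normv x by rewrite mulr_ge0 ?normv_ge0 ?ltW.
  rewrite !normvZ /normv WW sqrtr1 mulr1 -/(normv x) [`|r * _|]ger0_norm //.
  exact: ler_piMl.
have u_le := in_Aut_segment_dotv_le M_ge0 Omega_bound g_Aut seg.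
have [g_unit _] := g_Aut.
have w_le := sqr_dotv_cartan_le gKAK (invmx g *m w) (Ordinal last_lt).
rewrite mulKVmx // dotvZr WW mulr1 /= prednK ?(leq_ltn_trans (leq0n k) kd) // in w_le.
have v_le := cartan_dotv_near_Xi gKAK (invmx g *m x) kd (ltW far_radius_gt0) s_gap.
have tc0 (i : 'I_d) : (k <= i)%N -> (t *: c) i 0 = 0 by move=> ki; rewrite mxE c0 ?mulr0.
(* (r |x|)^2 <= s_d^2 |g^-1 w|^2 <= C s_d^2 |g^-1 x|^2 <= 2 C eta^2 |x|^2 < (r |x|)^2 *)
have := ler_wpM2l C_ge0 (v_le _ tc0); rewrite mulKVmx //.
have := ler_wpM2l C_ge0 e_small; have := ler_wpM2l (sqr_ge0 (s d)) u_le.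
have := far_radius_small; rewrite -(ltr_pM2r (dotv_gt0 x0)) exprMn sqr_normv in w_le *.
lra.
Qed.

End FarFromXi.

Theorem lemma4p1 (R : realType) (d : nat) (Omega K : set 'cV[R]_d) :
  properly_convex_domain Omega ->
  is_pset K -> pcompact K -> K `<=` Omega ->
  exists eps L : R, 0 < eps /\ 0 < L /\
    forall (k : nat) (g k1 k2 : 'M[R]_d) (s : nat -> R),
      (1 <= k <= d.-1)%N ->
      in_Aut Omega g ->
      cartan_decomp g k1 k2 s ->
      L < s k / s k.+1 ->
      (eps%:E < ereal_inf [set (pdist x (PXi k1 k))%:E | x in K])%E.
Proof.
move=> O_convex K_pset K_compact KO.
have [a [M [M_ge0 O_bound]]] := properly_convex_cone_bound O_convex.
have O_open : popen Omega by case: O_convex => _ [].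
have [r /andP[r_gt0 r_lt1] K_ball] := pcompact_uniform_ball K_pset K_compact KO O_open.
have eta_gt0 := far_radius_gt0 a M_ge0 r_gt0.
set eta := r / _ in eta_gt0.
exists (eta / 2), eta^-1; split; first by rewrite divr_gt0.
split=> [|k g k1 k2 s /andP[k_ge1 k_le] g_Aut gKAK sk_ratio]; first by rewrite invr_gt0.
have kd : (k < d)%N by lia.
have [k1o [_ [_ [s_ge0 _]]]] := gKAK.
pose i0 : 'I_d := Ordinal (leq_ltn_trans (leq0n k) kd).
apply: (@lt_ereal_inf_pdist _ _ _ _ (k1 *m delta_mx i0 0) eta).
- exact: PXi_delta.
- have s_gap : s k.+1 <= eta * s k.
    by apply: le_mul_of_inv_lt_div => //; apply: s_ge0; lia.
  move=> x y; exact: (far_from_Xi M_ge0 O_bound r_gt0 r_lt1 K_pset.1 K_ball kd g_Aut gKAK s_gap).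
- by rewrite ltr_pdivrMr // ltr_pMr // ltr1n.
Qed.
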